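(* Let $\sigma$ be a finite simplex whose vertices are linearly ordered by $\le$, let $Y$ be a topological space, and let $\Phi,\Psi:\sigma\rightrightarrows Y$ be mappings (to nonempty subsets) such that for each $v\in\sigma$, $\Phi(v)$ is contractible in $\Psi(v)$, and $\Psi(v)\subset\Phi(u)$ for all $u,v\in\sigma$ with $u<v$. For every $v\in\sigma$ fix a contraction $H_v:\Phi(v)\times[0,1]\to\Psi(v)$ of $\Phi(v)$ into a point $p_v\in\Psi(v)$. Then there exists a unique continuous map $h:|\sigma|\to Y$ such that (i) $h(v)=p_v$ for every $v\in\sigma$; (ii) $h(tv+(1-t)z)=H_v(h(z),t)$ for all $z\in|\tau|$ and $t\in[0,1]$, whenever $\tau\subset\sigma$ is a nonempty face and $v\in\sigma$ satisfies $v<u$ for every $u\in\tau$.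
   Context: $|\sigma|$ denotes the geometric simplex (convex hull of the vertices of $\sigma$, taken linearly independent in a linear space), and $|\tau|\subset|\sigma|$ that of a face $\tau$; $tv+(1-t)z$ is the usual convex combination in $|\sigma|$. A contraction of $S\subset T$ into $p\in T$ is a continuous $H:S\times[0,1]\to T$ with $H(y,0)=y$, $H(y,1)=p$ for all $y\in S$; $\Phi(v)$ is contractible in $\Psi(v)$ if such a contraction into $\Psi(v)$ exists. *)

From Stdlib Require Import Reals Lra.
Open Scope R_scope.

Record TopSpace := {
  carrier :> Type;
  is_open : (carrier -> Prop) -> Prop;
  open_full : is_open (fun _ => True);
  open_inter : forall U V, is_open U -> is_open V -> is_open (fun x => U x /\ V x);
  open_union : forall F : (carrier -> Prop) -> Prop,
      (forall U, F U -> is_open U) -> is_open (fun x => exists U, F U /\ U x)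
}.

(* Geometric simplex |sigma| on vertices 0..n, in barycentric coordinates
   (x : nat -> R, with x i = 0 for i > n); vertex v is the point [vertex v]. *)
Definition in_simplex (n : nat) (x : nat -> R) : Prop :=
  (forall i, (i <= n)%nat -> 0 <= x i) /\
  (forall i, (n < i)%nat -> x i = 0) /\
  sum_f_R0 x n = 1.

Definition vertex (v : nat) : nat -> R :=
  fun i => if Nat.eqb i v then 1 else 0.

Definition in_face (n : nat) (tau : nat -> Prop) (z : nat -> R) : Prop :=
  in_simplex n z /\ (forall i, ~ tau i -> z i = 0).

Definition convex_comb (t : R) (v : nat) (z : nat -> R) : nat -> R :=
  fun i => t * vertex v i + (1 - t) * z i.

(* Continuity of h : |sigma| -> Y (|sigma| with its Euclidean topology,
   expressed via the max-distance of barycentric coordinates). *)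
Definition continuous_on_simplex (n : nat) (Y : TopSpace) (h : (nat -> R) -> Y) : Prop :=
  forall U : Y -> Prop, is_open Y U ->
  forall x, in_simplex n x -> U (h x) ->
  exists delta, 0 < delta /\
    forall y, in_simplex n y ->
      (forall i, (i <= n)%nat -> Rabs (y i - x i) < delta) -> U (h y).

(* Continuity of H : A x [0,1] -> Y, A a subspace of Y (product topology). *)
Definition continuous_on_prod (Y : TopSpace) (A : Y -> Prop) (H : Y -> R -> Y) : Prop :=
  forall y t, A y -> 0 <= t <= 1 ->
  forall U : Y -> Prop, is_open Y U -> U (H y t) ->
  exists W : Y -> Prop, is_open Y W /\ W y /\
  exists delta, 0 < delta /\
    forall y' t', W y' -> A y' -> 0 <= t' <= 1 -> Rabs (t' - t) < delta -> U (H y' t').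

Definition contraction_into (Y : TopSpace) (A B : Y -> Prop) (H : Y -> R -> Y) (p : Y) : Prop :=
  continuous_on_prod Y A H /\
  (forall y t, A y -> 0 <= t <= 1 -> B (H y t)) /\
  (forall y, A y -> H y 0 = y) /\
  (forall y, A y -> H y 1 = p).

Definition good_map (n : nat) (Y : TopSpace) (H : nat -> Y -> R -> Y) (p : nat -> Y)
    (h : (nat -> R) -> Y) : Prop :=
  continuous_on_simplex n Y h /\
  (forall v, (v <= n)%nat -> h (vertex v) = p v) /\
  (forall (tau : nat -> Prop) (v : nat),
      (forall u, tau u -> (u <= n)%nat) -> (exists u, tau u) ->
      (v <= n)%nat -> (forall u, tau u -> (v < u)%nat) ->
      forall z t, in_face n tau z -> 0 <= t <= 1 ->
      h (convex_comb t v z) = H v (h z) t).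

From Stdlib Require Import Reals Lra Lia Classical FunctionalExtensionality.
Open Scope R_scope.

(* Order the vertices 0 < 1 < ... < n.  A point x of the face spanned by
   k, ..., n other than the vertex k is uniquely x = x_k v_k + (1 - x_k) z with
   z on the face spanned by k+1, ..., n, so (ii) forces h x = H_k (h z, x_k).
   Descending on k this defines h and shows its uniqueness; the nesting
   Psi(k+1) included in Phi(k) keeps h z in the domain of H_k.  Away from v_k,
   continuity follows from that of H_k and of z as a function of x.  At v_k,
   where z is undefined, compactness of the opposite face (a tube lemma) makes
   H_k (h z, t) tend to p_k uniformly in z as t -> 1. *)

Lemma Rabs_le_all_eq (a b : R) : (forall r, 0 < r -> Rabs (a - b) <= r) -> a = b.
Proof.
  intros hab. destruct (Req_dec a b) as [e|ne]; auto.
  assert (hpos : 0 < Rabs (a - b)) by (apply Rabs_pos_lt; lra).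
  specialize (hab (Rabs (a - b) / 2) ltac:(lra)). lra.
Qed.

Lemma sum_f_R0_drop (f : nat -> R) (N j : nat) : (j <= N)%nat ->
  sum_f_R0 (fun i => if Nat.eqb i j then 0 else f i) N = sum_f_R0 f N - f j.
Proof.
  induction N as [|N IH]; intros hj.
  - replace j with 0%nat by lia. simpl. ring.
  - rewrite !tech5. destruct (Nat.eqb_spec (S N) j) as [<-|hne].
    + rewrite (sum_eq _ f); [ring|].
      intros i hi. destruct (Nat.eqb_spec i (S N)); [lia|reflexivity].
    + rewrite IH by lia. ring.
Qed.

Lemma sum_f_R0_single (f : nat -> R) (N j : nat) : (j <= N)%nat ->
  (forall i, (i <= N)%nat -> i <> j -> f i = 0) -> sum_f_R0 f N = f j.
Proof.
  intros hj hf. pose proof (sum_f_R0_drop f N j hj) as E.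
  rewrite sum_eq_R0 in E; [lra|].
  intros i hi. destruct (Nat.eqb_spec i j); auto.
Qed.

Lemma sum_f_R0_ge_term (f : nat -> R) (N j : nat) :
  (forall i, (i <= N)%nat -> 0 <= f i) -> (j <= N)%nat -> f j <= sum_f_R0 f N.
Proof.
  intros hf hj. pose proof (sum_f_R0_drop f N j hj) as E.
  enough (0 <= sum_f_R0 (fun i => if Nat.eqb i j then 0 else f i) N) by lra.
  apply Rle_trans with (sum_f_R0 (fun _ => 0) N); [rewrite sum_cte; lra|].
  apply sum_Rle. intros i hi. destruct (Nat.eqb i j); [lra|auto].
Qed.

Lemma sum_f_R0_eq_term (f : nat -> R) (N j i : nat) :
  (forall i, (i <= N)%nat -> 0 <= f i) -> (j <= N)%nat -> (i <= N)%nat -> i <> j ->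
  sum_f_R0 f N = f j -> f i = 0.
Proof.
  intros hf hj hi hij hsum.
  set (g := fun l => if Nat.eqb l j then 0 else f l).
  assert (hg : sum_f_R0 g N = 0) by (unfold g; rewrite sum_f_R0_drop by exact hj; lra).
  assert (hgi : g i <= sum_f_R0 g N).
  { apply sum_f_R0_ge_term; auto. intros l hl. unfold g. destruct (Nat.eqb l j); [lra|auto]. }
  rewrite hg in hgi. unfold g in hgi. destruct (Nat.eqb_spec i j); [contradiction|].
  specialize (hf i hi). lra.
Qed.

Lemma sum_f_R0_close (a b : nat -> R) (N : nat) (r : R) :
  (forall i, (i <= N)%nat -> Rabs (a i - b i) <= r) ->
  Rabs (sum_f_R0 a N - sum_f_R0 b N) <= INR (S N) * r.
Proof.
  intros hab. rewrite <- minus_sum.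
  eapply Rle_trans; [apply sum_f_R0_triangle|].
  rewrite Rmult_comm, <- sum_cte. apply sum_Rle. exact hab.
Qed.

Definition tail_face (n k : nat) (x : nat -> R) : Prop :=
  in_simplex n x /\ forall i, (i < k)%nat -> x i = 0.

(* For [x_k <> 1], the point [z] of the face opposite to vertex [k] with
   [x = x_k v_k + (1 - x_k) z]; meaningless when [x_k = 1]. *)
Definition proj_from (k : nat) (x : nat -> R) : nat -> R :=
  fun i => if Nat.leb i k then 0 else x i / (1 - x k).

Lemma in_simplex_coord_bounds n x i : in_simplex n x -> (i <= n)%nat -> 0 <= x i <= 1.
Proof.
  intros [hpos [_ hsum]] hi. split; [auto|].
  rewrite <- hsum. apply sum_f_R0_ge_term; auto.
Qed.

Lemma in_simplex_vertex n k x : (k <= n)%nat -> in_simplex n x -> x k = 1 -> x = vertex k.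
Proof.
  intros hk [hpos [hout hsum]] hxk. apply functional_extensionality; intro i.
  unfold vertex. destruct (Nat.eqb_spec i k) as [->|hik]; [exact hxk|].
  destruct (Nat.le_gt_cases i n) as [hin|hin]; [|apply hout; lia].
  apply (sum_f_R0_eq_term x n k i); auto. lra.
Qed.

Lemma tail_face_last_coord n x : tail_face n n x -> x n = 1.
Proof.
  intros [[_ [_ hsum]] hpre]. rewrite <- hsum. symmetry.
  apply sum_f_R0_single; auto. intros i hi hin. apply hpre. lia.
Qed.

Lemma vertex_tail_face n v : (v <= n)%nat -> tail_face n v (vertex v).
Proof.
  intros hv. unfold vertex. split; [split; [|split]|].
  - intros i _. destruct (Nat.eqb i v); lra.
  - intros i hi. destruct (Nat.eqb_spec i v); [lia|reflexivity].
  - rewrite (sum_f_R0_single _ n v hv); [now rewrite Nat.eqb_refl|].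
    intros i _ hiv. now destruct (Nat.eqb_spec i v).
  - intros i hi. destruct (Nat.eqb_spec i v); [lia|reflexivity].
Qed.

Lemma proj_from_id k x : (forall i, (i <= k)%nat -> x i = 0) -> proj_from k x = x.
Proof.
  intros hx. apply functional_extensionality; intro i. unfold proj_from.
  destruct (Nat.leb_spec i k); [symmetry; auto|].
  rewrite (hx k) by lia. field.
Qed.

Lemma tail_face_proj_from n k x : (k <= n)%nat -> tail_face n k x -> x k <> 1 ->
  tail_face n (S k) (proj_from k x).
Proof.
  intros hk [hx hpre] hx1. pose proof (in_simplex_coord_bounds n x k hx hk) as hxk.
  destruct hx as [hpos [hout hsum]]. unfold proj_from.
  split; [split; [|split]|].
  - intros i hi. destruct (Nat.leb i k); [lra|].
    apply Rmult_le_pos; [auto|]. left. apply Rinv_0_lt_compat. lra.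
  - intros i hi. destruct (Nat.leb_spec i k); [reflexivity|].
    rewrite hout by lia. apply Rdiv_0_l.
  - rewrite (sum_eq _ (fun i => (if Nat.eqb i k then 0 else x i) * / (1 - x k))).
    + rewrite <- scal_sum, sum_f_R0_drop, hsum by exact hk. field. lra.
    + intros i hi. destruct (Nat.leb_spec i k), (Nat.eqb_spec i k); try lia;
        [ring | rewrite hpre by lia; ring | reflexivity].
  - intros i hi. destruct (Nat.leb_spec i k); [reflexivity|lia].
Qed.

Lemma convex_comb_proj_from k x : (forall i, (i < k)%nat -> x i = 0) -> x k <> 1 ->
  convex_comb (x k) k (proj_from k x) = x.
Proof.
  intros hpre hx1. apply functional_extensionality; intro i.
  unfold convex_comb, vertex, proj_from.
  destruct (Nat.eqb_spec i k) as [->|hik].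
  - rewrite Nat.leb_refl. ring.
  - destruct (Nat.leb_spec i k); [rewrite (hpre i) by lia; ring|]. field. lra.
Qed.

Lemma convex_comb_at_vertex t v z : z v = 0 -> convex_comb t v z v = t.
Proof. intros hz. unfold convex_comb, vertex. rewrite Nat.eqb_refl, hz. ring. Qed.

Lemma proj_from_convex_comb t v z : (forall i, (i <= v)%nat -> z i = 0) -> t <> 1 ->
  proj_from v (convex_comb t v z) = z.
Proof.
  intros hz ht. apply functional_extensionality; intro i. unfold proj_from.
  rewrite convex_comb_at_vertex by auto.
  destruct (Nat.leb_spec i v); [symmetry; auto|].
  unfold convex_comb, vertex. destruct (Nat.eqb_spec i v); [lia|]. field. lra.
Qed.

Lemma tail_face_convex_comb n v z t : (v <= n)%nat -> tail_face n (S v) z -> 0 <= t <= 1 ->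
  tail_face n v (convex_comb t v z).
Proof.
  intros hv [[hpos [hout hsum]] hpre] ht. unfold convex_comb.
  split; [split; [|split]|].
  - intros i hi. specialize (hpos i hi). unfold vertex. destruct (Nat.eqb i v); nra.
  - intros i hi. unfold vertex. destruct (Nat.eqb_spec i v); [lia|]. rewrite hout by lia. ring.
  - rewrite plus_sum.
    rewrite (sum_eq _ (fun i => vertex v i * t)) by (intros; ring).
    rewrite (sum_eq (fun i => (1 - t) * z i) (fun i => z i * (1 - t))) by (intros; ring).
    rewrite <- !scal_sum, hsum.
    destruct (vertex_tail_face n v hv) as [[_ [_ ->]] _]. ring.
  - intros i hi. unfold vertex. destruct (Nat.eqb_spec i v); [lia|]. rewrite hpre by lia. ring.
Qed.

Lemma in_face_tail_face n tau v z : (forall u, tau u -> (v < u)%nat) -> in_face n tau z ->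
  tail_face n (S v) z.
Proof.
  intros hlt [hz hzt]. split; [exact hz|]. intros i hi. apply hzt.
  intros hti. specialize (hlt i hti). lia.
Qed.

Lemma tail_face_in_face n k z : tail_face n (S k) z -> in_face n (fun u => (k < u <= n)%nat) z.
Proof.
  intros [hz hpre]. split; [exact hz|]. intros i hi.
  destruct (Nat.le_gt_cases i k); [apply hpre; lia|]. apply (proj1 (proj2 hz)). lia.
Qed.

Definition cube (m : nat) (z : nat -> R) : Prop := forall i, (i < m)%nat -> 0 <= z i <= 1.

Definition close (m : nat) (x y : nat -> R) (e : R) : Prop :=
  forall i, (i < m)%nat -> Rabs (y i - x i) < e.

Lemma close_refl m x e : 0 < e -> close m x x e.
Proof. intros he i _. rewrite Rminus_diag, Rabs_R0. exact he. Qed.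

Lemma close_trans m x y z e1 e2 : close m x y e1 -> close m y z e2 -> close m x z (e1 + e2).
Proof.
  intros hxy hyz i hi. specialize (hxy i hi). specialize (hyz i hi).
  replace (z i - x i) with ((z i - y i) + (y i - x i)) by ring.
  eapply Rle_lt_trans; [apply Rabs_triang|]. lra.
Qed.

Lemma close_le m x y e e' : close m x y e -> e <= e' -> close m x y e'.
Proof. intros hxy he i hi. specialize (hxy i hi). lra. Qed.

(* The supremum of the [a] such that [P] holds uniformly on [[0, a]] is [1]. *)
Lemma uniform_on_interval (P : R -> R -> Prop) :
  (forall s d d', P s d -> 0 < d' <= d -> P s d') ->
  (forall s, 0 <= s <= 1 -> exists e, 0 < e /\ exists d, 0 < d /\
     forall s', 0 <= s' <= 1 -> Rabs (s' - s) < e -> P s' d) ->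
  exists d, 0 < d /\ forall s, 0 <= s <= 1 -> P s d.
Proof.
  intros anti loc.
  set (E := fun a => 0 <= a <= 1 /\ exists d, 0 < d /\ forall s, 0 <= s <= a -> P s d).
  assert (E0 : E 0).
  { destruct (loc 0) as [e [he [d [hd Hd]]]]; [lra|].
    split; [lra|]. exists d. split; [exact hd|]. intros s hs. apply Hd; [lra|].
    replace (s - 0) with 0 by lra. rewrite Rabs_R0. exact he. }
  assert (Ebound : bound E) by (exists 1; intros x [hx _]; lra).
  destruct (completeness E Ebound (ex_intro _ 0 E0)) as [m [Hub Hlub]].
  assert (hm0 : 0 <= m) by (apply Hub; exact E0).
  assert (hm1 : m <= 1) by (apply Hlub; intros x [hx _]; lra).
  destruct (loc m) as [e [he [dm [hdm Hdm]]]]; [lra|].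
  assert (exists a, E a /\ m - e < a) as [a [[ha [da [hda Hda]]] hma]].
  { apply NNPP; intros C. enough (m <= m - e) by lra.
    apply Hlub. intros x Ex. apply Rnot_lt_le. intros hx. apply C. exists x; auto. }
  set (b := Rmin 1 (m + e / 2)).
  assert (Eb : E b).
  { split; [unfold b, Rmin; destruct Rle_dec; lra|].
    exists (Rmin da dm). split; [unfold Rmin; destruct Rle_dec; lra|].
    intros s hs. destruct (Rle_dec s a).
    - apply anti with da; [apply Hda; lra|unfold Rmin; destruct Rle_dec; lra].
    - apply anti with dm; [|unfold Rmin; destruct Rle_dec; lra].
      apply Hdm; unfold b, Rmin in hs; destruct Rle_dec; [lra|lra|apply Rabs_def1; lra..].
  }
  assert (hbm : b <= m) by (apply Hub; exact Eb).
  assert (hb1 : b = 1) by (unfold b, Rmin in *; destruct Rle_dec; lra).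
  destruct Eb as [_ [d [hd Hd]]]. exists d. split; [exact hd|].
  intros s hs. apply Hd. lra.
Qed.

Lemma uniform_on_cube (m : nat) : forall P : (nat -> R) -> R -> Prop,
  (forall z d d', P z d -> 0 < d' <= d -> P z d') ->
  (forall z, cube m z -> exists e, 0 < e /\ exists d, 0 < d /\
     forall z', cube m z' -> close m z z' e -> P z' d) ->
  exists d, 0 < d /\ forall z, cube m z -> P z d.
Proof.
  induction m as [|m IH]; intros P anti loc.
  - destruct (loc (fun _ => 0)) as [e [he [d [hd Hd]]]]; [intros i hi; lia|].
    exists d. split; [exact hd|]. intros z hz. apply Hd; [exact hz|intros i hi; lia].
  - set (chi := fun s d => forall y, cube (S m) y -> Rabs (y m - s) < d -> P y d).
    destruct (uniform_on_interval chi) as [d [hd Hd]].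
    + intros s d d' Hc hd' y hy hym. apply anti with d; [apply Hc; auto; lra|lra].
    + intros s hs.
      set (Q := fun x d => forall y, cube (S m) y -> close m x y d ->
                 Rabs (y m - s) < d -> P y d).
      destruct (IH Q) as [ds [hds Hds]].
      * intros x d d' HQ hd' y hy hxy hym. apply anti with d; [|lra].
        apply HQ; [exact hy|apply (close_le _ _ _ d'); [exact hxy|lra]|lra].
      * intros x hx.
        set (z := fun i => if Nat.eqb i m then s else x i).
        destruct (loc z) as [ez [hez [dz [hdz Hdz]]]].
        { intros i hi. unfold z. destruct (Nat.eqb_spec i m); [exact hs|apply hx; lia]. }
        assert (hmin : 0 < Rmin (ez / 2) dz <= ez / 2 /\ Rmin (ez / 2) dz <= dz)
          by (unfold Rmin; destruct Rle_dec; lra).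
        exists (ez / 2). split; [lra|]. exists (Rmin (ez / 2) dz). split; [lra|].
        intros x' hx' hxx' y hy hxy hym.
        apply anti with dz; [|lra].
        apply Hdz; [exact hy|]. intros i hi. unfold z.
        destruct (Nat.eqb_spec i m) as [->|him]; [lra|].
        assert (hxy' : close m x y ez).
        { replace ez with (ez / 2 + ez / 2) by field.
          apply close_trans with x'; [exact hxx'|apply (close_le _ _ _ _ _ hxy); lra]. }
        apply hxy'. lia.
      * exists (ds / 2). split; [lra|]. exists (ds / 2). split; [lra|].
        intros s' hs' hss' y hy hym. apply anti with ds; [|lra].
        apply (Hds y (fun i hi => hy i ltac:(lia)) y hy (close_refl _ _ _ hds)).
        replace (y m - s) with ((y m - s') + (s' - s)) by ring.
        eapply Rle_lt_trans; [apply Rabs_triang|]. lra.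
    + exists d. split; [exact hd|]. intros z hz. apply (Hd (z m)); [apply hz; lia|exact hz|].
      rewrite Rminus_diag, Rabs_R0. exact hd.
Qed.

Lemma uniform_on_closed (m : nat) (K : (nat -> R) -> Prop) (P : (nat -> R) -> R -> Prop) :
  (forall z, K z -> cube m z) ->
  (forall z, (forall r, 0 < r -> exists z', K z' /\ close m z z' r) ->
     exists z0, K z0 /\ forall i, (i < m)%nat -> z0 i = z i) ->
  (forall z d d', P z d -> 0 < d' <= d -> P z d') ->
  (forall z, K z -> exists e, 0 < e /\ exists d, 0 < d /\
     forall z', K z' -> close m z z' e -> P z' d) ->
  exists d, 0 < d /\ forall z, K z -> P z d.
Proof.
  intros hcube closed anti loc.
  set (Q := fun z d => forall z', K z' -> close m z z' d -> P z' d).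
  destruct (uniform_on_cube m Q) as [d [hd Hd]].
  - intros z d d' HQ hd' z' hz' hzz'. apply anti with d; [|lra].
    apply HQ; [exact hz'|apply (close_le _ _ _ d'); [exact hzz'|lra]].
  - intros z _. destruct (classic (exists z0, K z0 /\ forall i, (i < m)%nat -> z0 i = z i))
      as [[z0 [hz0 hagree]]|hfar].
    + destruct (loc z0 hz0) as [e [he [d [hd Hd]]]].
      assert (hmin : 0 < Rmin (e / 2) d <= e / 2 /\ Rmin (e / 2) d <= d)
        by (unfold Rmin; destruct Rle_dec; lra).
      exists (e / 2). split; [lra|]. exists (Rmin (e / 2) d). split; [lra|].
      intros z'' _ hzz'' z' hz' hz''z'. apply anti with d; [|lra].
      apply Hd; [exact hz'|]. replace e with (e / 2 + e / 2) by field.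
      apply close_trans with z''; [|apply (close_le _ _ _ _ _ hz''z'); lra].
      intros i hi. rewrite hagree by exact hi. apply hzz''. exact hi.
    + assert (exists r, 0 < r /\ forall z', K z' -> ~ close m z z' r) as [r [hr Hr]].
      { apply NNPP. intros C. apply hfar, closed. intros r hr.
        apply NNPP. intros C'. apply C. exists r. split; [exact hr|].
        intros z' hz' hzz'. apply C'. exists z'. auto. }
      exists (r / 2). split; [lra|]. exists (r / 2). split; [lra|].
      intros z'' _ hzz'' z' hz' hz''z'. exfalso. apply (Hr z' hz').
      replace r with (r / 2 + r / 2) by field. apply close_trans with z''; assumption.
  - exists d. split; [exact hd|]. intros z hz. apply (Hd z); [exact (hcube z hz)|exact hz|apply close_refl; exact hd].
Qed.

Lemma tail_face_closed n k z :
  (forall r, 0 < r -> exists z', tail_face n k z' /\ close (S n) z z' r) ->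
  tail_face n k (fun i => if Nat.leb i n then z i else 0).
Proof.
  intros approx.
  assert (hcoord : forall i, (i <= n)%nat -> forall r, 0 < r ->
            exists z', tail_face n k z' /\ Rabs (z' i - z i) < r).
  { intros i hi r hr. destruct (approx r hr) as [z' [hz' hc]].
    exists z'. split; [exact hz'|]. apply hc. lia. }
  split; [split; [|split]|].
  - intros i hi. rewrite (proj2 (Nat.leb_le i n) hi).
    apply Rle_plus_epsilon. intros r hr.
    destruct (hcoord i hi r hr) as [z' [[[hpos _] _] hc]].
    specialize (hpos i hi). apply Rabs_def2 in hc. lra.
  - intros i hi. destruct (Nat.leb_spec i n); [lia|reflexivity].
  - rewrite (sum_eq _ z) by (intros i hi; now rewrite (proj2 (Nat.leb_le i n) hi)).
    apply Rabs_le_all_eq. intros r hr.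
    assert (hN : 0 < INR (S n)) by (apply lt_0_INR; lia).
    destruct (approx (r / INR (S n))) as [z' [[[_ [_ hsum]] _] hc]];
      [apply Rdiv_lt_0_compat; assumption|].
    rewrite <- hsum, Rabs_minus_sym.
    replace r with (INR (S n) * (r / INR (S n))) by (field; lra).
    apply sum_f_R0_close. intros i hi. left. apply hc. lia.
  - intros i hi. destruct (Nat.leb_spec i n) as [hin|]; [|reflexivity].
    apply Rabs_le_all_eq. intros r hr.
    destruct (hcoord i hin r hr) as [z' [[_ hpre] hc]].
    rewrite (hpre i hi), Rminus_0_l, Rabs_Ropp in hc. rewrite Rminus_0_r. lra.
Qed.

Lemma ratio_close xi yi xk yk e d : 0 <= xi <= 1 -> 0 <= xk < 1 ->
  Rabs (yi - xi) < e -> Rabs (yk - xk) < e ->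
  e <= (1 - xk) / 2 -> 4 * e <= d * ((1 - xk) * (1 - xk)) ->
  Rabs (yi / (1 - yk) - xi / (1 - xk)) < d.
Proof.
  intros hxi hxk hi hk he hd.
  set (a := 1 - xk) in *. set (b := 1 - yk).
  apply Rabs_def2 in hi. apply Rabs_def2 in hk.
  assert (hb : a / 2 <= b) by (unfold a, b in *; lra).
  assert (hnum : Rabs ((yi - xi) * a + xi * (a - b)) < 2 * e).
  { eapply Rle_lt_trans; [apply Rabs_triang|]. rewrite !Rabs_mult.
    rewrite (Rabs_right a), (Rabs_right xi) by lra.
    assert (Rabs (yi - xi) < e) by (apply Rabs_def1; lra).
    assert (Rabs (a - b) < e) by (apply Rabs_def1; unfold a, b in *; lra).
    assert (a <= 1) by (unfold a; lra).
    pose proof (Rabs_pos (yi - xi)). pose proof (Rabs_pos (a - b)). nra. }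
  replace (yi / b - xi / a) with (((yi - xi) * a + xi * (a - b)) / (a * b))
    by (field; split; lra).
  unfold Rdiv. rewrite Rabs_mult, Rabs_inv, (Rabs_right (a * b)) by nra.
  apply (Rmult_lt_reg_r (a * b)); [nra|].
  rewrite Rmult_assoc, Rinv_l, Rmult_1_r by nra.
  assert (0 < d) by nra. nra.
Qed.

Lemma proj_from_continuous n k x d : (k <= n)%nat -> in_simplex n x -> x k <> 1 -> 0 < d ->
  exists e, 0 < e /\ forall y, close (S n) x y e ->
    y k <> 1 /\ close (S n) (proj_from k x) (proj_from k y) d.
Proof.
  intros hk hx hx1 hd.
  pose proof (in_simplex_coord_bounds n x k hx hk) as hxk.
  assert (hxk1 : x k < 1) by (destruct hxk as [_ [|]]; [lra|contradiction]).
  set (a := 1 - x k).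
  assert (ha : 0 < a) by (unfold a; lra).
  set (e := Rmin (a / 2) (d * (a * a) / 4)).
  assert (he : 0 < e <= a / 2 /\ e <= d * (a * a) / 4).
  { pose proof (Rmult_lt_0_compat _ _ hd (Rmult_lt_0_compat _ _ ha ha)).
    unfold e, Rmin; destruct Rle_dec; lra. }
  exists e. split; [lra|]. intros y hxy.
  assert (hyk : Rabs (y k - x k) < e) by (apply hxy; lia).
  split; [apply Rabs_def2 in hyk; unfold a in *; lra|].
  intros i hi. unfold proj_from. destruct (Nat.leb i k).
  - rewrite Rminus_diag, Rabs_R0. exact hd.
  - apply ratio_close with e; unfold a in *; try lra.
    + apply (in_simplex_coord_bounds n x i hx). lia.
    + apply hxy. exact hi.
Qed.

Lemma good_map_cone n Y H p h k z t : good_map n Y H p h -> (k < n)%nat ->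
  tail_face n (S k) z -> 0 <= t <= 1 -> h (convex_comb t k z) = H k (h z) t.
Proof.
  intros [_ [_ hcone]] hk hz ht.
  apply (hcone (fun u => (k < u <= n)%nat)); try (intros; lia).
  - exists n. lia.
  - apply tail_face_in_face. exact hz.
  - exact ht.
Qed.

Lemma good_map_unique n Y H p h1 h2 : good_map n Y H p h1 -> good_map n Y H p h2 ->
  forall x, in_simplex n x -> h1 x = h2 x.
Proof.
  intros g1 g2.
  assert (hvert : forall k x, (k <= n)%nat -> in_simplex n x -> x k = 1 -> h1 x = h2 x).
  { intros k x hk hx hx1. rewrite (in_simplex_vertex n k x hk hx hx1).
    rewrite (proj1 (proj2 g1) k hk), (proj1 (proj2 g2) k hk). reflexivity. }
  assert (hface : forall d k x, (k + d = n)%nat -> tail_face n k x -> h1 x = h2 x).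
  { induction d as [|d IH]; intros k x hkd hx.
    - apply (hvert k); [lia|apply hx|]. replace k with n by lia.
      apply tail_face_last_coord. replace n with k at 2 by lia. exact hx.
    - destruct (Req_EM_T (x k) 1) as [hx1|hx1]; [apply (hvert k); [lia|apply hx|exact hx1]|].
      pose proof (convex_comb_proj_from k x (proj2 hx) hx1) as E.
      pose proof (tail_face_proj_from n k x ltac:(lia) hx hx1) as hz.
      pose proof (in_simplex_coord_bounds n x k (proj1 hx) ltac:(lia)) as ht.
      set (z := proj_from k x) in *. set (t := x k) in *.
      rewrite <- E, (good_map_cone n Y H p h1 k z t g1), (good_map_cone n Y H p h2 k z t g2),
        (IH (S k) z) by (auto; lia).
      reflexivity. }
  intros x hx. apply (hface n 0%nat x); [lia|split; [exact hx|intros; lia]].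
Qed.

Section ConeExtension.

Variables (n : nat) (Y : TopSpace) (Phi Psi : nat -> Y -> Prop).
Hypothesis nested : forall u v, (u < v)%nat -> (v <= n)%nat -> forall y, Psi v y -> Phi u y.
Variables (H : nat -> Y -> R -> Y) (p : nat -> Y).
Hypothesis Hp : forall v, (v <= n)%nat -> Psi v (p v).
Hypothesis Hcontr : forall v, (v <= n)%nat -> contraction_into Y (Phi v) (Psi v) (H v) (p v).

Fixpoint cone_map (m k : nat) (x : nat -> R) : Y :=
  match m with
  | O => p k
  | S m' => if Req_EM_T (x k) 1 then p k
            else H k (cone_map m' (S k) (proj_from k x)) (x k)
  end.

Definition extension : (nat -> R) -> Y := cone_map n 0.

Lemma cone_map_in_Psi m : forall k x, (k + m = n)%nat -> tail_face n k x ->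
  Psi k (cone_map m k x).
Proof.
  induction m as [|m IH]; intros k x hkm hx; simpl.
  - apply Hp. lia.
  - destruct (Req_EM_T (x k) 1) as [_|hx1]; [apply Hp; lia|].
    destruct (Hcontr k ltac:(lia)) as [_ [HPsi _]]. apply HPsi.
    + apply (nested k (S k)); [lia|lia|].
      apply IH; [lia|]. apply tail_face_proj_from; [lia|exact hx|exact hx1].
    + apply (in_simplex_coord_bounds n); [apply hx|lia].
Qed.

(* A vanishing coordinate applies a contraction at time [0], i.e. the identity. *)
Lemma cone_map_skip j : forall m k x, (k + j + m = n)%nat -> tail_face n (k + j) x ->
  cone_map (j + m) k x = cone_map m (k + j) x.
Proof.
  induction j as [|j IH]; intros m k x hn hx.
  - rewrite Nat.add_0_r. reflexivity.
  - assert (hxk : x k = 0) by (apply (proj2 hx); lia).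
    simpl. rewrite hxk. destruct (Req_EM_T 0 1) as [|_]; [lra|].
    rewrite proj_from_id by (intros i hi; apply (proj2 hx); lia).
    replace (k + S j)%nat with (S k + j)%nat in * by lia.
    rewrite IH by (auto; lia).
    destruct (Hcontr k ltac:(lia)) as [_ [_ [H0 _]]]. apply H0.
    apply (nested k (S k + j)); [lia|lia|]. apply cone_map_in_Psi; [lia|exact hx].
Qed.

Lemma extension_on_tail_face k x : (k <= n)%nat -> tail_face n k x ->
  extension x = cone_map (n - k) k x.
Proof.
  intros hk hx. unfold extension.
  replace n with (k + (n - k))%nat at 1 by lia.
  apply (cone_map_skip k (n - k) 0); [lia|exact hx].
Qed.

Lemma extension_in_Psi k x : (k <= n)%nat -> tail_face n k x -> Psi k (extension x).
Proof.
  intros hk hx. rewrite (extension_on_tail_face k x hk hx).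
  apply cone_map_in_Psi; [lia|exact hx].
Qed.

Lemma extension_at_vertex k x : (k <= n)%nat -> tail_face n k x -> x k = 1 -> extension x = p k.
Proof.
  intros hk hx hx1. rewrite (extension_on_tail_face k x hk hx).
  destruct (n - k)%nat; simpl; [reflexivity|].
  destruct (Req_EM_T (x k) 1); [reflexivity|contradiction].
Qed.

Lemma extension_vertex v : (v <= n)%nat -> extension (vertex v) = p v.
Proof.
  intros hv. apply extension_at_vertex; [exact hv|apply vertex_tail_face; exact hv|].
  unfold vertex. now rewrite Nat.eqb_refl.
Qed.

Lemma extension_step k x : (k < n)%nat -> tail_face n k x -> x k <> 1 ->
  extension x = H k (extension (proj_from k x)) (x k).
Proof.
  intros hk hx hx1.
  pose proof (tail_face_proj_from n k x ltac:(lia) hx hx1) as hz.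
  rewrite (extension_on_tail_face k x ltac:(lia) hx), (extension_on_tail_face (S k) _ hk hz).
  replace (n - k)%nat with (S (n - S k)) by lia. simpl.
  destruct (Req_EM_T (x k) 1); [contradiction|reflexivity].
Qed.

Lemma extension_in_Phi k z : (k < n)%nat -> tail_face n (S k) z -> Phi k (extension z).
Proof.
  intros hk hz. apply (nested k (S k)); [lia|lia|]. apply extension_in_Psi; [lia|exact hz].
Qed.

Lemma extension_cone v z t : (v < n)%nat -> tail_face n (S v) z -> 0 <= t <= 1 ->
  extension (convex_comb t v z) = H v (extension z) t.
Proof.
  intros hv hz ht.
  assert (hzv : forall i, (i <= v)%nat -> z i = 0) by (intros i hi; apply (proj2 hz); lia).
  pose proof (tail_face_convex_comb n v z t ltac:(lia) hz ht) as hx.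
  pose proof (convex_comb_at_vertex t v z (hzv v (le_n v))) as hxv.
  destruct (Req_EM_T t 1) as [->|ht1].
  - destruct (Hcontr v ltac:(lia)) as [_ [_ [_ H1]]].
    rewrite H1 by (apply extension_in_Phi; assumption).
    apply extension_at_vertex; [lia|exact hx|exact hxv].
  - rewrite (extension_step v _ hv hx) by (rewrite hxv; exact ht1).
    rewrite hxv, proj_from_convex_comb by assumption. reflexivity.
Qed.

Definition continuous_on_face (k : nat) (f : (nat -> R) -> Y) : Prop :=
  forall x, tail_face n k x -> forall U, is_open Y U -> U (f x) ->
  exists delta, 0 < delta /\ forall y, tail_face n k y -> close (S n) x y delta -> U (f y).

Lemma extension_continuous_on_last_face : continuous_on_face n extension.
Proof.
  intros x hx U hU hUx. exists 1. split; [lra|]. intros y hy _.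
  rewrite (extension_at_vertex n y), <- (extension_at_vertex n x);
    auto using tail_face_last_coord.
Qed.

(* The tube lemma: compactness of the face opposite to [k] makes the
   contraction [H k] uniformly continuous in time near [t = 1]. *)
Lemma extension_tube k : (k < n)%nat -> continuous_on_face (S k) extension ->
  forall U, is_open Y U -> U (p k) ->
  exists d, 0 < d /\ forall z, tail_face n (S k) z ->
    forall t, 1 - d < t <= 1 -> U (H k (extension z) t).
Proof.
  intros hk hcont U hU hUp.
  destruct (Hcontr k ltac:(lia)) as [Hc [_ [_ H1]]].
  apply (uniform_on_closed (S n) (tail_face n (S k))
           (fun z d => forall t, 1 - d < t <= 1 -> U (H k (extension z) t))).
  - intros z hz i hi. apply (in_simplex_coord_bounds n); [apply hz|lia].
  - intros z happrox. eexists. split; [apply tail_face_closed; exact happrox|].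
    intros i hi. cbv beta. now rewrite (proj2 (Nat.leb_le i n) ltac:(lia)).
  - intros z d d' hP hd' t ht. apply hP. lra.
  - intros z hz. pose proof (extension_in_Phi k z hk hz) as hPhi.
    destruct (Hc (extension z) 1 hPhi ltac:(lra) U hU) as [W [hW [hWz [d1 [hd1 Hd1]]]]];
      [rewrite H1 by exact hPhi; exact hUp|].
    destruct (hcont z hz W hW hWz) as [d2 [hd2 Hd2]].
    assert (hmin : 0 < Rmin 1 d1 <= 1 /\ Rmin 1 d1 <= d1)
      by (unfold Rmin; destruct Rle_dec; lra).
    exists d2. split; [exact hd2|]. exists (Rmin 1 d1). split; [lra|].
    intros z' hz' hzz' t ht. apply Hd1.
    + apply Hd2; assumption.
    + apply extension_in_Phi; assumption.
    + lra.
    + apply Rabs_def1; lra.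
Qed.

Lemma extension_continuous_step k : (k < n)%nat ->
  continuous_on_face (S k) extension -> continuous_on_face k extension.
Proof.
  intros hk hcont x hx U hU hUx.
  assert (hbounds : forall y, tail_face n k y -> 0 <= y k <= 1)
    by (intros y hy; apply (in_simplex_coord_bounds n); [apply hy|lia]).
  destruct (Req_EM_T (x k) 1) as [hx1|hx1].
  - rewrite (extension_at_vertex k x) in hUx by (auto; lia).
    destruct (extension_tube k hk hcont U hU hUx) as [d [hd Hd]].
    exists d. split; [exact hd|]. intros y hy hxy.
    destruct (Req_EM_T (y k) 1) as [hy1|hy1].
    + rewrite (extension_at_vertex k y) by (auto; lia). exact hUx.
    + rewrite (extension_step k y hk hy hy1). apply Hd.
      * apply tail_face_proj_from; [lia|exact hy|exact hy1].
      * specialize (hxy k ltac:(lia)). rewrite hx1 in hxy. apply Rabs_def2 in hxy.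
        specialize (hbounds y hy). lra.
  - rewrite (extension_step k x hk hx hx1) in hUx.
    destruct (Hcontr k ltac:(lia)) as [Hc _].
    pose proof (tail_face_proj_from n k x ltac:(lia) hx hx1) as hz.
    destruct (Hc _ (x k) (extension_in_Phi k _ hk hz) (hbounds x hx) U hU hUx)
      as [W [hW [hWz [d1 [hd1 Hd1]]]]].
    destruct (hcont _ hz W hW hWz) as [d2 [hd2 Hd2]].
    destruct (proj_from_continuous n k x d2 ltac:(lia) (proj1 hx) hx1 hd2) as [e [he He]].
    assert (hmin : 0 < Rmin e d1 <= e /\ Rmin e d1 <= d1)
      by (unfold Rmin; destruct Rle_dec; lra).
    exists (Rmin e d1). split; [lra|]. intros y hy hxy.
    destruct (He y (close_le _ _ _ _ e hxy ltac:(lra))) as [hy1 hzz].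
    pose proof (tail_face_proj_from n k y ltac:(lia) hy hy1) as hzy.
    rewrite (extension_step k y hk hy hy1). apply Hd1.
    + apply Hd2; assumption.
    + apply extension_in_Phi; assumption.
    + apply hbounds. exact hy.
    + specialize (hxy k ltac:(lia)). lra.
Qed.

Lemma extension_continuous : continuous_on_face 0 extension.
Proof.
  assert (hface : forall d k, (k + d = n)%nat -> continuous_on_face k extension).
  { induction d as [|d IH]; intros k hkd.
    - replace k with n by lia. exact extension_continuous_on_last_face.
    - apply extension_continuous_step; [lia|]. apply IH. lia. }
  apply (hface n). lia.
Qed.

Lemma extension_good_map : good_map n Y H p extension.
Proof.
  split; [|split].
  - intros U hU x hx hUx.
    assert (hx0 : tail_face n 0 x) by (split; [exact hx|intros; lia]).
    destruct (extension_continuous x hx0 U hU hUx) as [d [hd Hd]].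
    exists d. split; [exact hd|]. intros y hy hxy.
    apply Hd; [split; [exact hy|intros; lia]|intros i hi; apply hxy; lia].
  - exact extension_vertex.
  - intros tau v hsub [u hu] hv hlt z t hz ht.
    assert (hvn : (v < n)%nat) by (specialize (hsub u hu); specialize (hlt u hu); lia).
    apply extension_cone; [exact hvn|apply (in_face_tail_face n tau v z hlt hz)|exact ht].
Qed.

End ConeExtension.

Theorem proposition3p3 (n : nat) (Y : TopSpace)
  (Phi Psi : nat -> Y -> Prop)
  (Phi_ne : forall v, (v <= n)%nat -> exists y, Phi v y)
  (Psi_ne : forall v, (v <= n)%nat -> exists y, Psi v y)
  (nested : forall u v, (u < v)%nat -> (v <= n)%nat -> forall y, Psi v y -> Phi u y)
  (H : nat -> Y -> R -> Y) (p : nat -> Y)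
  (Hp : forall v, (v <= n)%nat -> Psi v (p v))
  (Hcontr : forall v, (v <= n)%nat -> contraction_into Y (Phi v) (Psi v) (H v) (p v)) :
  exists h : (nat -> R) -> Y,
    good_map n Y H p h /\
    (forall h' : (nat -> R) -> Y, good_map n Y H p h' ->
       forall x, in_simplex n x -> h' x = h x).
Proof.
  pose proof (extension_good_map n Y Phi Psi nested H p Hp Hcontr) as hgood.
  exists (extension n Y H p). split; [exact hgood|].
  intros h' hh'. exact (good_map_unique n Y H p h' _ hh' hgood).
Qed.
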